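(* Let $n\ge2$, let $\overline{G}_n=\overline{H}_0\overline{H}_1\cdots\overline{H}_{n-1}$ be a polyphenyl hexagonal chain with $n$ hexagons, and let $\overline{G}_{n-1}=\overline{H}_0\cdots\overline{H}_{n-2}$. Then $$W(\overline{G}_n)=W(\overline{G}_{n-1})+6\,W(\overline{G}_{n-1},t_{n-1})+90n-63,$$ and for every vertex $t_n$ of $\overline{H}_{n-1}$ other than $c_{n-1}$, $$W(\overline{G}_n,t_n)=W(\overline{G}_{n-1},t_{n-1})+g(t_n),$$ where $g(t_n)=12(n-1)+9$ if $t_n$ is an ortho-vertex $o_{n-1}$, $g(t_n)=18(n-1)+9$ if $t_n$ is a meta-vertex $m_{n-1}$, and $g(t_n)=24(n-1)+9$ if $t_n$ is the para-vertex $p_{n-1}$ of $\overline{H}_{n-1}$. Moreover $W(\overline{G}_1)=W(\overline{H}_0)=27$ and $W(\overline{G}_1,t_1)=g(t_1)=9$ for any vertex $t_1$ of $\overline{H}_0$.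
   Context: All graphs are simple and connected; $d(u,v)$ is the shortest-path distance; $W(G,v)=\sum_{u\in V(G)}d_G(u,v)$ and the Wiener index is $W(G)=\sum_{\{u,v\}\subseteq V(G)}d_G(u,v)$. A polyphenyl hexagonal chain $\overline{G}_n=\overline{H}_0\overline{H}_1\cdots\overline{H}_{n-1}$ of length $n$ consists of pairwise vertex-disjoint hexagons (6-cycles) $\overline{H}_0,\dots,\overline{H}_{n-1}$ together with cut-edges: $\overline{G}_1=\overline{H}_0$, and for $k\ge1$, $\overline{G}_{k+1}$ is obtained from $\overline{G}_k$ by adding the hexagon $\overline{H}_k$ and a cut-edge joining a vertex $c_k$ of $\overline{H}_k$ to a vertex $t_k$ of $\overline{H}_{k-1}$ (the tail), where for $k\ge2$, $t_k\ne c_{k-1}$ (i.e. $t_k$ is a non-cut-vertex of the terminal hexagon $\overline{H}_{k-1}$). For $k\ge1$, a vertex of $\overline{H}_k$ at distance $1$, $2$, $3$ from $c_k$ is an ortho-, meta-, para-vertex of $\overline{H}_k$, denoted $o_k,m_k,p_k$. *)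

From mathcomp Require Import all_boot.
Set Implicit Arguments. Unset Strict Implicit. Unset Printing Implicit Defensive.

Definition nbhd (T : finType) (e : rel T) (S : {set T}) : {set T} :=
  S :|: [set y | [exists x in S, e x y]].

(* shortest-path distance d(u,v): the least k such that v is reachable from u
   by a walk of length <= k (for connected graphs this is < #|T|) *)
Definition gdist (T : finType) (e : rel T) (u v : T) : nat :=
  find (fun k => v \in iter k (nbhd e) [set u]) (iota 0 #|T|).

Definition Wv (T : finType) (e : rel T) (v : T) : nat :=
  \sum_(u : T) gdist e u v.

Definition Wiener (T : finType) (e : rel T) : nat :=
  \sum_(u : T) \sum_(v : T | enum_rank u < enum_rank v) gdist e u v.

Definition hex_adj : rel 'I_6 :=
  fun a b => (b == (a + 1) %% 6 :> nat) || (a == (b + 1) %% 6 :> nat).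

(* vertex (k, j) = vertex j of hexagon H_k, for k < n *)
Definition V (n : nat) : finType := ('I_n * 'I_6)%type.

(* The chain Gbar_n = H_0 ... H_{n-1}: for k >= 1 the cut-edge joins
   vertex c k of H_k to vertex t k (the tail) of H_{k-1}. *)
Definition chain_adj (c t : nat -> 'I_6) (n : nat) : rel (V n) :=
  fun x y =>
    [|| (x.1 == y.1) && hex_adj x.2 y.2,
        [&& (x.1).+1 == y.1 :> nat, x.2 == t y.1 & y.2 == c y.1]
      | [&& (y.1).+1 == x.1 :> nat, y.2 == t x.1 & x.2 == c x.1]].

Arguments chain_adj c t n : clear implicits.

Definition valid_chain (c t : nat -> 'I_6) (n : nat) : Prop :=
  forall k, 2 <= k -> k < n -> t k != c k.-1.

(* g as a function of n and of the distance d of t_n from c_{n-1} in H_{n-1}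
   (d = 1 ortho, 2 meta, 3 para) *)
Definition gval (n d : nat) : nat :=
  match d with
  | 1 => 12 * (n - 1) + 9
  | 2 => 18 * (n - 1) + 9
  | 3 => 24 * (n - 1) + 9
  | _ => 0
  end.

From mathcomp Require Import all_boot zify.

Set Implicit Arguments.
Unset Strict Implicit.

(* Distances in a polyphenyl chain are explicit: a geodesic from hexagon i up
   to hexagon j > i leaves H_i at the tail t_{i+1}, crosses every cut-edge on
   the way and walks around each intermediate hexagon from c_k to t_{k+1}.
   Hence attaching H_{n-1} leaves all old distances unchanged, and an old
   vertex u is at distance d(u, t_{n-1}) + 1 + d(c_{n-1}, b) from vertex b of
   H_{n-1}.  Summing over u gives
   W(G_n, b) = W(G_{n-1}, t_{n-1}) + 6(n-1)(1 + d(c_{n-1}, b)) + 9,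
   and the Wiener recursion follows from 2 W(G) = sum_v W(G, v). *)

Lemma find_leq_iota d N : d < N -> find (leq d) (iota 0 N) = d.
Proof.
move=> ltdN; rewrite -(subnKC (ltnW ltdN)) iotaD find_cat size_iota.
have -> : has (leq d) (iota 0 d) = false.
  by apply/hasPn => k; rewrite mem_iota add0n -ltnNge => /andP[].
have : 0 < N - d by rewrite subn_gt0.
by case: (N - d) => // k _; rewrite /= add0n leqnn addn0.
Qed.

Section GraphDistance.

Variables (T : finType) (e : rel T).

Lemma gdistxx u : gdist e u u = 0.
Proof.
rewrite /gdist; have : 0 < #|T| by apply/card_gt0P; exists u.
by case: #|T| => //= N _; rewrite set11.
Qed.

Lemma gdist_eq_levels u (D : T -> nat) :
  D u = 0 -> (forall x y, e x y -> D y <= D x + 1) ->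
  (forall v, v != u -> exists2 x, e x v & D v = D x + 1) ->
  (forall v, D v < #|T|) -> forall v, gdist e u v = D v.
Proof.
move=> Du0 De Dpred Dlt.
have balls k : iter k (nbhd e) [set u] = [set v | D v <= k].
  elim: k => [|k IHk] /=; apply/setP => v; rewrite !inE.
    have [->|nvu] := eqVneq v u; first by rewrite Du0.
    by have [x _ ->] := Dpred v nvu; rewrite addn1.
  rewrite /nbhd IHk !inE; apply/idP/idP.
    case/orP => [/leq_trans-> //|/existsP[x /andP[]]].
    by rewrite inE => Dx /De Dv; lia.
  move=> Dv; case: leqP => //= Dk.
  have nvu : v != u by apply: contraTneq Dk => ->; rewrite Du0.
  have [x ex Dvx] := Dpred v nvu.
  by apply/existsP; exists x; rewrite inE ex andbT; lia.
move=> v; rewrite /gdist (@eq_find _ _ (leq (D v))) ?find_leq_iota // => k.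
by rewrite balls inE.
Qed.

Lemma Wiener_double :
  (forall u v, gdist e u v = gdist e v u) -> Wiener e * 2 = \sum_v Wv e v.
Proof.
move=> gdist_sym; rewrite /Wv exchange_big /Wiener /=.
set r := @enum_rank T.
have split_row u : \sum_v gdist e u v =
    \sum_(v | r u < r v) gdist e u v + \sum_(v | r v < r u) gdist e u v.
  rewrite (bigID (fun v => r u < r v)) /=; congr (_ + _).
  rewrite (bigID (fun v => r v < r u)) /= [X in _ + X]big1 ?addn0.
    by apply: eq_bigl => v; case: ltngtP.
  move=> v; rewrite -!leqNgt => /andP[le_vu le_uv].
  have /enum_rank_inj-> : r u = r v.
    by apply/val_inj/eqP; rewrite eqn_leq le_uv le_vu.
  exact: gdistxx.
rewrite (eq_bigr _ (fun u _ => split_row u)) big_split /= muln2 -addnn.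
congr (_ + _); rewrite [RHS](exchange_big_dep predT) //=.
by apply: eq_bigr => u _; apply: eq_bigr => v _; apply: gdist_sym.
Qed.

End GraphDistance.

Ltac case_I6 := let n := fresh in let H := fresh in
  case=> [[|[|[|[|[|[|n]]]]]] H]; last by [].

Definition hex_dist (a b : 'I_6) : nat :=
  let d := (a + 6 - b) %% 6 in minn d (6 - d).

Lemma hex_dist_sym a b : hex_dist a b = hex_dist b a.
Proof. by move: a b; case_I6; case_I6. Qed.

Lemma hex_distxx a : hex_dist a a = 0.
Proof. by move: a; case_I6. Qed.

Lemma hex_dist_le3 a b : hex_dist a b <= 3.
Proof. by move: a b; case_I6; case_I6. Qed.

Lemma hex_dist_gt0 a b : b != a -> 0 < hex_dist a b.
Proof. by move: a b; case_I6; case_I6. Qed.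

Lemma hex_dist_adj a x y : hex_adj x y -> hex_dist a y <= hex_dist a x + 1.
Proof. by move: a x y; case_I6; case_I6; case_I6. Qed.

Lemma hex_dist_pred a b : b != a ->
  exists2 x, hex_adj x b & hex_dist a b = hex_dist a x + 1.
Proof.
move: a b; case_I6; case_I6 => // _.
all: first [ by exists (@Ordinal 6 0 isT) | by exists (@Ordinal 6 1 isT)
           | by exists (@Ordinal 6 2 isT) | by exists (@Ordinal 6 3 isT)
           | by exists (@Ordinal 6 4 isT) | by exists (@Ordinal 6 5 isT) ].
Qed.

Lemma sum_hex_dist b : \sum_(a < 6) hex_dist a b = 9.
Proof. by rewrite !big_ord_recr big_ord0 /=; move: b; case_I6. Qed.

Lemma sum_hex_dist_r a : \sum_(b < 6) hex_dist a b = 9.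
Proof. by rewrite -(sum_hex_dist a); apply: eq_bigr => b _; apply: hex_dist_sym. Qed.

Lemma gdist_hex a b : gdist hex_adj a b = hex_dist a b.
Proof.
move: b; apply: gdist_eq_levels.
- exact: hex_distxx.
- exact: hex_dist_adj.
- by move=> v; apply: hex_dist_pred.
- by move=> v; rewrite card_ord; have := hex_dist_le3 a v; lia.
Qed.

Section Chain.

Context {c t : nat -> 'I_6}.

Notation G := (chain_adj c t).

(* Length of the walk from vertex a of H_i up to vertex b of H_j; it is only
   meaningful for i <= j. *)
Fixpoint chain_dist_up (i : nat) (a : 'I_6) (j : nat) (b : 'I_6) : nat :=
  match j with
  | 0 => hex_dist a b
  | j'.+1 => if i == j'.+1 then hex_dist a b
             else chain_dist_up i a j' (t j'.+1) + 1 + hex_dist (c j'.+1) b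
  end.

Lemma chain_dist_up_same i a b : chain_dist_up i a i b = hex_dist a b.
Proof. by case: i => //= i; rewrite eqxx. Qed.

Lemma chain_dist_upS i a j b : i <= j ->
  chain_dist_up i a j.+1 b = chain_dist_up i a j (t j.+1) + 1 + hex_dist (c j.+1) b.
Proof. by move=> le_ij /=; rewrite ltn_eqF. Qed.

Lemma chain_dist_up_first i a j b : i < j ->
  chain_dist_up i a j b = hex_dist a (t i.+1) + 1 + chain_dist_up i.+1 (c i.+1) j b.
Proof.
elim: j b => // j IHj b lt_ij; rewrite chain_dist_upS; last by lia.
case: (ltngtP i j) => [lt_ij'|lt_ji|<-]; last by rewrite !chain_dist_up_same.
  by rewrite IHj // chain_dist_upS // !addnA.
by move: lt_ij; rewrite ltnS leqNgt lt_ji.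
Qed.

Lemma chain_dist_up_le i a j b : i <= j -> chain_dist_up i a j b <= 4 * (j - i) + 3.
Proof.
elim: j b => [|j IHj] b le_ij; first by have := hex_dist_le3 a b; rewrite /=; lia.
have [->|ne_ij] := eqVneq i j.+1.
  by rewrite chain_dist_up_same; have := hex_dist_le3 a b; lia.
rewrite chain_dist_upS; last by lia.
by have := IHj (t j.+1) ltac:(lia); have := hex_dist_le3 (c j.+1) b; lia.
Qed.

Definition chain_dist i a j b :=
  if i <= j then chain_dist_up i a j b else chain_dist_up j b i a.

Lemma chain_dist_sym i a j b : chain_dist i a j b = chain_dist j b i a.
Proof.
by rewrite /chain_dist; case: ltngtP => // ->; rewrite !chain_dist_up_same hex_dist_sym.
Qed.

Lemma chain_dist_same i a b : chain_dist i a i b = hex_dist a b.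
Proof. by rewrite /chain_dist leqnn chain_dist_up_same. Qed.

Lemma chain_dist_after i a j b : i <= j ->
  chain_dist i a j.+1 b = chain_dist i a j (t j.+1) + 1 + hex_dist (c j.+1) b.
Proof. by move=> le_ij; rewrite /chain_dist le_ij chain_dist_upS // leqW. Qed.

Lemma chain_dist_before i a j b : j < i ->
  chain_dist i a j b = hex_dist b (t j.+1) + 1 + chain_dist i a j.+1 (c j.+1).
Proof.
move=> lt_ji; rewrite /chain_dist.
have -> : (i <= j) = false by rewrite leqNgt lt_ji.
rewrite chain_dist_up_first //.
have [->|ne_ij] := eqVneq i j.+1.
  by rewrite leqnn !chain_dist_up_same (hex_dist_sym a).
by have -> : (i <= j.+1) = false by lia.
Qed.

Lemma chain_dist_le i a j b : chain_dist i a j b <= 4 * (maxn i j - minn i j) + 3.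
Proof.
rewrite /chain_dist; case: (leqP i j) => [le_ij|/ltnW le_ji].
  by have := chain_dist_up_le a b le_ij; lia.
by have := chain_dist_up_le b a le_ji; lia.
Qed.

Lemma chain_dist_adj n i a (x y : V n) :
  G n x y -> chain_dist i a y.1 y.2 <= chain_dist i a x.1 x.2 + 1.
Proof.
have cut j : chain_dist i a j.+1 (c j.+1) = chain_dist i a j (t j.+1) + 1 \/
             chain_dist i a j (t j.+1) = chain_dist i a j.+1 (c j.+1) + 1.
  case: (leqP i j) => [le_ij|lt_ji].
    by left; rewrite chain_dist_after // hex_distxx addn0.
  by right; rewrite (chain_dist_before _ _ lt_ji) hex_distxx add0n addnC.
case: x y => [i1 b1] [i2 b2]; rewrite /chain_adj /=.
case/or3P => [/andP[/eqP<- adj_b]|/and3P[/eqP<- /eqP-> /eqP->]|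
              /and3P[/eqP<- /eqP-> /eqP->]].
- case: (ltngtP i i1) => [lt_i|lt_i|<-]; last by rewrite !chain_dist_same hex_dist_adj.
  + case: (i1 : nat) lt_i => // j lt_ij.
    rewrite !chain_dist_after //; have := hex_dist_adj (c j.+1) adj_b; lia.
  + rewrite !(chain_dist_before _ _ lt_i) (hex_dist_sym b1) (hex_dist_sym b2).
    by have := hex_dist_adj (t i1.+1) adj_b; lia.
- by case: (cut i1) => ->; lia.
- by case: (cut i2) => ->; lia.
Qed.

Lemma chain_dist_pred n (u v : V n) : v != u ->
  exists2 x : V n, G n x v & chain_dist u.1 u.2 v.1 v.2 = chain_dist u.1 u.2 x.1 x.2 + 1.
Proof.
case: u v => [i a] [j b] /= ne_vu.
have around x : hex_adj x b -> G n (j, x) (j, b) by rewrite /chain_adj /= eqxx => ->.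
case: (ltngtP i j) => [lt_ij|lt_ji|eq_ij].
- case: j lt_ij ne_vu around => [[|j] lt_jn] //= lt_ij _ around.
  have [->|ne_bc] := eqVneq b (c j.+1).
    exists (Ordinal (ltnW lt_jn), t j.+1).
      by rewrite /chain_adj /= !eqxx orbT.
    by rewrite /= chain_dist_after // hex_distxx addn0.
  have [x adj_xb dist_x] := hex_dist_pred ne_bc.
  exists (Ordinal lt_jn, x); first exact: around.
  by rewrite /= !chain_dist_after // dist_x; lia.
- have [->|ne_bt] := eqVneq b (t j.+1).
    have lt_jn : j.+1 < n by apply: leq_ltn_trans (ltn_ord i).
    exists (Ordinal lt_jn, c j.+1); first by rewrite /chain_adj /= !eqxx !orbT.
    by rewrite /= (chain_dist_before _ _ lt_ji) hex_distxx add0n addnC.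
  have [x adj_xb dist_x] := hex_dist_pred ne_bt.
  exists (j, x); first exact: around.
  rewrite /= !(chain_dist_before _ _ lt_ji) (hex_dist_sym b) (hex_dist_sym x) dist_x.
  lia.
- have ne_ba : b != a.
    by apply: contraNneq ne_vu => ->; apply/eqP; congr pair; apply: val_inj.
  have [x adj_xb dist_x] := hex_dist_pred ne_ba.
  by exists (j, x); [exact: around | rewrite /= eq_ij !chain_dist_same].
Qed.

Lemma gdist_chain n (u v : V n) : gdist (G n) u v = chain_dist u.1 u.2 v.1 v.2.
Proof.
move: v; apply: gdist_eq_levels.
- by rewrite chain_dist_same hex_distxx.
- exact: chain_dist_adj.
- exact: chain_dist_pred.
- move=> v; rewrite card_prod !card_ord.
  have := chain_dist_le u.1 u.2 v.1 v.2; have := ltn_ord u.1; have := ltn_ord v.1.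
  lia.
Qed.

Lemma gdist_chain_sym n (u v : V n) : gdist (G n) u v = gdist (G n) v u.
Proof. by rewrite !gdist_chain chain_dist_sym. Qed.

Definition old_vertex n (u : V n) : V n.+1 := (widen_ord (leqnSn n) u.1, u.2).

Definition new_vertex {n} (b : 'I_6) : V n.+1 := (ord_max, b).

Lemma big_V n (F : V n -> nat) :
  \sum_(u : V n) F u = \sum_(i < n) \sum_(a < 6) F (i, a).
Proof. by rewrite pair_bigA; apply: eq_bigr => -[]. Qed.

Lemma big_V_recr n (F : V n.+1 -> nat) :
  \sum_(u : V n.+1) F u = \sum_(u : V n) F (old_vertex u) + \sum_(b < 6) F (new_vertex b).
Proof. by rewrite !big_V big_ord_recr. Qed.

Lemma gdist_chain_old n (u v : V n) :
  gdist (G n.+1) (old_vertex u) (old_vertex v) = gdist (G n) u v.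
Proof. by rewrite !gdist_chain. Qed.

Lemma gdist_chain_new n a b : gdist (G n.+1) (new_vertex a) (new_vertex b) = hex_dist a b.
Proof. by rewrite gdist_chain chain_dist_same. Qed.

Section Attach.

Variables (k : nat) (w : V k.+1).
Hypotheses (w1 : (w.1 : nat) = k) (w2 : w.2 = t k.+1).

Lemma gdist_chain_old_new u b :
  gdist (G k.+2) (old_vertex u) (new_vertex b)
    = gdist (G k.+1) u w + 1 + hex_dist (c k.+1) b.
Proof.
rewrite !gdist_chain /= w1 w2 chain_dist_after //.
by rewrite -ltnS ltn_ord.
Qed.

Lemma sum_gdist_to_new b :
  \sum_(u : V k.+1) gdist (G k.+2) (old_vertex u) (new_vertex b)
    = Wv (G k.+1) w + 6 * k.+1 * (1 + hex_dist (c k.+1) b).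
Proof.
rewrite (eq_bigr _ (fun u _ => gdist_chain_old_new u b)) !big_split /=.
rewrite !sum_nat_const card_prod !card_ord -addnA; congr (_ + _); lia.
Qed.

Lemma Wv_chain_new b :
  Wv (G k.+2) (new_vertex b) = Wv (G k.+1) w + 6 * k.+1 * (1 + hex_dist (c k.+1) b) + 9.
Proof.
rewrite /Wv big_V_recr sum_gdist_to_new -(sum_hex_dist b).
by congr (_ + _); apply: eq_bigr => a _; apply: gdist_chain_new.
Qed.

Lemma Wiener_chainS :
  Wiener (G k.+2) = Wiener (G k.+1) + 6 * Wv (G k.+1) w + 90 * k + 117.
Proof.
have Wv_old v : Wv (G k.+2) (old_vertex v)
    = Wv (G k.+1) v + \sum_(b < 6) gdist (G k.+2) (old_vertex v) (new_vertex b).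
  rewrite /Wv big_V_recr (eq_bigr _ (fun u _ => gdist_chain_old u v)).
  by congr (_ + _); apply: eq_bigr => b _; apply: gdist_chain_sym.
have sum_Wv_new : \sum_(b < 6) Wv (G k.+2) (new_vertex b)
    = \sum_(b < 6) (Wv (G k.+1) w + 6 * k.+1 * (1 + hex_dist (c k.+1) b)) + 6 * 9.
  rewrite (eq_bigr _ (fun b _ => Wv_chain_new b)) big_split /=.
  by rewrite sum_nat_const card_ord.
have sum_cross : \sum_(b < 6) (Wv (G k.+1) w + 6 * k.+1 * (1 + hex_dist (c k.+1) b))
    = 6 * Wv (G k.+1) w + 90 * k.+1.
  rewrite big_split /= sum_nat_const card_ord -big_distrr big_split /= sum_hex_dist_r.
  by rewrite sum_nat_const card_ord; lia.
apply/eqP; rewrite -(eqn_pmul2r (isT : 0 < 2)); apply/eqP.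
rewrite (Wiener_double (@gdist_chain_sym k.+2)) big_V_recr.
rewrite (eq_bigr _ (fun v _ => Wv_old v)) big_split /=.
rewrite -(Wiener_double (@gdist_chain_sym k.+1)).
rewrite [X in _ + X + _]exchange_big /= (eq_bigr _ (fun b _ => sum_gdist_to_new b)).
by rewrite sum_Wv_new sum_cross; lia.
Qed.

End Attach.

Lemma Wv_chain1 v : Wv (G 1) v = 9.
Proof.
case: v => i b; rewrite /Wv big_V big_ord1 -(sum_hex_dist b).
by apply: eq_bigr => a _; rewrite gdist_chain /= !ord1 chain_dist_same.
Qed.

Lemma Wiener_chain1 : Wiener (G 1) = 27.
Proof.
apply/eqP; rewrite -(eqn_pmul2r (isT : 0 < 2)) Wiener_double; last exact: gdist_chain_sym.
by rewrite (eq_bigr _ (fun v _ => Wv_chain1 v)) sum_nat_const card_prod !card_ord.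
Qed.

End Chain.

Lemma gval_hex_dist k a b : b != a ->
  gval k.+2 (hex_dist a b) = 6 * k.+1 * (1 + hex_dist a b) + 9.
Proof.
move=> ne_ba; have := hex_dist_gt0 ne_ba; have := hex_dist_le3 a b.
by case: hex_dist => [|[|[|[|d]]]] //= _ _; lia.
Qed.

Theorem theorem3p1 (c t : nat -> 'I_6) (n : nat) :
  2 <= n -> valid_chain c t n ->
  [/\ Wiener (chain_adj c t 1) = 27,
      (forall v : V 1, Wv (chain_adj c t 1) v = 9)
    & forall w : V n.-1, (w.1 : nat) = n - 2 -> w.2 = t (n - 1) ->
        Wiener (chain_adj c t n) =
          Wiener (chain_adj c t n.-1) + 6 * Wv (chain_adj c t n.-1) w + 90 * n - 63
        /\ (forall v : V n, (v.1 : nat) = n - 1 -> v.2 != c (n - 1) ->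
              Wv (chain_adj c t n) v =
                Wv (chain_adj c t n.-1) w + gval n (gdist hex_adj (c (n - 1)) v.2))].
Proof.
case: n => [|[|k]] // _ _; split; [exact: Wiener_chain1 | exact: Wv_chain1 |].
rewrite /= !subSS !subn0 => w w1 w2; split.
  by rewrite (Wiener_chainS w1 w2); lia.
case=> i b /= i_new ne_bc.
have -> : (i, b) = new_vertex b by congr pair; apply: val_inj.
by rewrite (Wv_chain_new w1 w2) gdist_hex gval_hex_dist ?addnA.
Qed.
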